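(* Let $\mathcal{I}=(G,V^\infty,T,k)$ be an instance of \textsc{OddMultiwayNodeCut} with $G$ a DAG, and let $Z\subseteq V(G)\setminus T$. Let $(G',V'^\infty):=\mathrm{torso}(G,V^\infty,Z)$ and $\mathcal{I}':=(G',V'^\infty,T,k)$. Then $\mathcal{I}$ admits a solution of size at most $k$ that is disjoint from $Z$ if and only if $\mathcal{I}'$ admits a solution of size at most $k$.
   Context: Paths are simple directed paths; a path is odd if it has an odd number of edges. An instance $(G,V^\infty,T,k)$ of \textsc{OddMultiwayNodeCut} consists of a DAG $G$, protected nodes $V^\infty\subseteq V(G)$, terminals $T\subseteq V^\infty$ and $k\in\mathbb{Z}_+$. A $T$-path is a path with both end nodes in $T$. A solution is a set $M\subseteq V(G)\setminus V^\infty$ intersecting every odd $T$-path. Parity-preserving torso. Given a DAG $G$ and $Z,V^\infty\subseteq V(G)$, first form $G_0$ from $G\setminus Z$ by adding an edge $u\rightarrow v$ for every pair of distinct $u,v\in V(G)\setminus Z$ such that $G$ has an odd $u\rightarrow v$ path with all internal nodes in $Z$. Then, for every pair of distinct $u,v\in V(G)\setminus Z$ such that $G$ has an even $u\rightarrow v$ path with all internal nodes in $Z$, add a new node $x_{uv}$ and edges $u\rightarrow x_{uv}$, $x_{uv}\rightarrow v$. The result is $G'$. Set $V'^\infty:=(V^\infty\setminus Z)\cup\{\text{new nodes }x_{uv}\}$, and $\mathrm{torso}(G,V^\infty,Z):=(G',V'^\infty)$. *)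

From mathcomp Require Import all_boot.
Set Implicit Arguments. Unset Strict Implicit. Unset Printing Implicit Defensive.

Fixpoint chain (W : Type) (e : W -> W -> Prop) (s : seq W) : Prop :=
  match s with
  | x :: ((y :: _) as t) => e x y /\ chain e t
  | _ => True
  end.

(* The (simple, directed) path x :: p in the graph (vert, e):
   it starts at x, ends at last x p, and has size p edges. *)
Definition is_path (W : eqType) (vert : W -> Prop) (e : W -> W -> Prop)
    (x : W) (p : seq W) : Prop :=
  [/\ uniq (x :: p), (forall y, y \in x :: p -> vert y) & chain e (x :: p)].

Definition is_solution (W : eqType) (vert : W -> Prop) (e : W -> W -> Prop)
    (Vinf T : W -> Prop) (M : seq W) : Prop :=
  (forall m, m \in M -> vert m /\ ~ Vinf m) /\
  (forall x p, is_path vert e x p -> odd (size p) -> T x -> T (last x p) ->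
     exists m, m \in M /\ m \in x :: p).

Definition acyclic_rel (V : finType) (E : rel V) : Prop :=
  forall x p, path E x p -> last x p = x -> p = [::].

Definition Zpath (V : finType) (E : rel V) (Z : {set V}) (u v : V)
    (mid : seq V) : Prop :=
  is_path (fun _ => True) (fun a b => E a b) u (rcons mid v) /\
  (forall z, z \in mid -> z \in Z).

Definition odd_Zpath (V : finType) (E : rel V) (Z : {set V}) (u v : V) : Prop :=
  exists mid, Zpath E Z u v mid /\ odd (size (rcons mid v)).

Definition even_Zpath (V : finType) (E : rel V) (Z : {set V}) (u v : V) : Prop :=
  exists mid, Zpath E Z u v mid /\ ~~ odd (size (rcons mid v)).

(* Vertices of the torso live in V + V*V: inl v is an old node (v not in Z),
   inr (u,v) is the new node x_uv (present iff an even u->v Z-path exists). *)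
Definition torso_vert (V : finType) (E : rel V) (Z : {set V})
    (w : V + (V * V)) : Prop :=
  match w with
  | inl v => v \notin Z
  | inr (u, v) => [/\ u \notin Z, v \notin Z, u <> v & even_Zpath E Z u v]
  end.

Definition torso_edge (V : finType) (E : rel V) (Z : {set V})
    (w1 w2 : V + (V * V)) : Prop :=
  match w1, w2 with
  | inl u, inl v =>
      [/\ u \notin Z, v \notin Z & (E u v \/ (u <> v /\ odd_Zpath E Z u v))]
  | inl u, inr (a, b) => u = a /\ torso_vert E Z (inr (a, b))
  | inr (a, b), inl v => v = b /\ torso_vert E Z (inr (a, b))
  | inr _, inr _ => False
  end.

Definition torso_Vinf (V : finType) (E : rel V) (Z Vinf : {set V})
    (w : V + (V * V)) : Prop :=
  match w with
  | inl v => v \in Vinf /\ v \notin Z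
  | inr _ => torso_vert E Z w
  end.

Definition torso_T (V : finType) (T : {set V}) (w : V + (V * V)) : Prop :=
  match w with
  | inl v => v \in T
  | inr _ => False
  end.

(* An odd terminal path of the torso expands into an odd terminal walk of G by
   replacing each torso edge with the Z-path it stands for, and x_uv -> v with an
   even u -> v Z-path; in a DAG this walk is a path, and its vertices outside Z
   are the original vertices of the torso path.  Conversely, cutting an odd
   terminal path of G at its vertices outside Z turns it into an odd torso path
   with the same vertices outside Z, going through x_uv exactly where a segment
   is even.  The new nodes x_uv are protected, so solutions transfer in both
   directions as the same set of original vertices. *)

From mathcomp Require Import all_boot.
Set Implicit Arguments. Unset Strict Implicit. Unset Printing Implicit Defensive.

Lemma chain_path (T : Type) (E : rel T) x p :
  chain (fun a b => E a b) (x :: p) <-> path E x p.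
Proof.
elim: p x => [|y p IH] x //=.
by split=> [[-> /IH ->] | /andP [-> /IH]].
Qed.

Lemma acyclic_path_uniq (V : finType) (E : rel V) x p :
  acyclic_rel E -> path E x p -> uniq (x :: p).
Proof.
move=> acyclicE; elim: p x => [|y p IH] x // Exp.
rewrite cons_uniq IH ?andbT; last by case/andP: Exp.
apply/negP=> x_in; case/splitPr: x_in Exp => p1 p2.
rewrite cat_path /= => /andP [Ep1 /andP [Ex _]].
have /acyclicE : path E x (rcons p1 x) by rewrite rcons_path Ep1.
by rewrite last_rcons => /(_ erefl); case: p1 {Ep1 Ex}.
Qed.

Definition getl (A B : Type) (w : A + B) : option A :=
  if w is inl a then Some a else None.

Lemma mem_pmap_getl (A B : eqType) (s : seq (A + B)) a :
  (a \in pmap (@getl A B) s) = (inl a \in s).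
Proof. by elim: s => [|[a'|b] s IH] //=; rewrite !inE IH. Qed.

Lemma split_first_notin (T : eqType) (A : {pred T}) (p : seq T) y :
  y \in p -> y \notin A ->
  exists mid c p', [/\ p = mid ++ c :: p', {subset mid <= A} & c \notin A].
Proof.
move=> y_p yA; have hasA : has [predC A] p by apply/hasP; exists y.
set i := find [predC A] p; have i_lt : i < size p by rewrite -has_find.
exists (take i p), (nth y p i), (drop i.+1 p); split.
- by rewrite -drop_nth // cat_take_drop.
- move=> z /(nthP y) [j j_lt <-]; rewrite size_take i_lt in j_lt.
  by rewrite nth_take //; move/negbFE: (before_find y j_lt).
- by have := nth_find y hasA.
Qed.

Section Torso.
Variables (V : finType) (E : rel V) (Z : {set V}).

Definition torso_src (w : V + V * V) : V :=
  match w with inl v => v | inr (u, _) => u end.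

Definition torso_new (w : V + V * V) : bool := if w is inr _ then true else false.

Lemma torso_edge_lift w c : torso_edge E Z w (inl c) ->
  exists mid, [/\ path E (torso_src w) (rcons mid c), {subset mid <= Z} &
                  odd (size mid) = torso_new w].
Proof.
case: w => [a|[u v]] /=.
- case=> _ _ [Eac | [_ [mid [[[_ _ /chain_path Pmid] midZ] odd_mid]]]].
    by exists [::]; rewrite /= Eac.
  by exists mid; rewrite size_rcons /= in odd_mid; rewrite (negbTE odd_mid).
- case=> -> [_ _ _ [mid [[[_ _ /chain_path Pmid] midZ] even_mid]]].
  by exists mid; rewrite size_rcons /= negbK in even_mid.
Qed.

(* The parity correction [torso_new x] accounts for an initial edge u -> x_uv,
   which has no counterpart in G. *)
Lemma torso_walk_lift p x b :
  chain (torso_edge E Z) (x :: p) -> last x p = inl b ->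
  exists q, [/\ path E (torso_src x) q, last (torso_src x) q = b,
     odd (size q) = odd (size p) (+) torso_new x &
     forall y, y \in q -> y \notin Z -> inl y \in p].
Proof.
elim: p x => [|y p IH] x /=; first by case: x => // a _ [->]; exists [::].
case=> edge_xy walk_y last_p; have [q [Pq last_q parity_q qZ]] := IH y walk_y last_p.
case: y edge_xy walk_y last_p Pq last_q parity_q qZ => [c|[a c]] edge_xy _ _ Pq last_q parity_q qZ.
- have [mid [Pmid midZ odd_mid]] := torso_edge_lift edge_xy.
  exists (rcons mid c ++ q); split.
  + by rewrite cat_path Pmid last_rcons.
  + by rewrite last_cat last_rcons.
  + by rewrite size_cat size_rcons oddD /= odd_mid parity_q addbF; case: torso_new; case: odd.
  + move=> y; rewrite mem_cat mem_rcons inE -orbA => /or3P [/eqP -> _ | /midZ yZ | y_q yZ].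
    * exact: mem_head.
    * by rewrite yZ.
    * by rewrite inE qZ ?orbT.
- case: x edge_xy => [x [-> _] | [] //] /=.
  by exists q; split=> //; rewrite parity_q /= addbT addbF.
Qed.

Lemma torso_path_hop x c mid r :
  Zpath E Z x c mid -> x \notin Z ->
  is_path (torso_vert E Z) (torso_edge E Z) (inl c) r ->
  {in inl c :: r, forall w, torso_src w != x} ->
  exists h, [/\ is_path (torso_vert E Z) (torso_edge E Z) (inl x) (h ++ inl c :: r),
                odd (size h) = odd (size mid) & {in h, forall w, torso_src w = x}].
Proof.
move=> Zmid xZ [Ur Vr Cr] src_r.
have cZ : c \notin Z := Vr (inl c) (mem_head _ _).
have /eqP xc : x != c by rewrite eq_sym; exact: (src_r (inl c) (mem_head _ _)).
have x_notin w : torso_src w = x -> w \notin inl c :: r.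
  by move=> src_w; apply/negP=> /src_r; rewrite src_w eqxx.
case odd_mid: (odd (size mid)).
- have vert_xc : torso_vert E Z (inr (x, c)).
    by split=> //; exists mid; rewrite size_rcons /= odd_mid.
  exists [:: inr (x, c)]; split=> //; last by move=> w; rewrite mem_seq1 => /eqP ->.
  split=> //; first by rewrite /= inE x_notin // x_notin // Ur.
  move=> w; rewrite inE => /orP [/eqP -> // | ].
  by rewrite inE => /orP [/eqP -> // | /Vr].
- exists [::]; split=> //; split=> //=; first by rewrite x_notin.
  + by move=> w; rewrite inE => /orP [/eqP -> // | /Vr].
  + by split=> //; split=> //; right; split=> //; exists mid; rewrite size_rcons /= odd_mid.
Qed.

Lemma torso_path_project p x :
  path E x p -> uniq (x :: p) -> x \notin Z -> last x p \notin Z ->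
  exists r, [/\ is_path (torso_vert E Z) (torso_edge E Z) (inl x) r,
    last (inl x) r = inl (last x p), odd (size r) = odd (size p) &
    {in inl x :: r, forall w, torso_src w \in x :: p}].
Proof.
have [n] := ubnP (size p); elim: n p x => // n IH p x /ltnSE size_p Pp Up xZ lastZ.
case: p => [|y p] in size_p Pp Up lastZ *.
  exists [::]; split=> //; last by move=> w; rewrite mem_seq1 => /eqP ->; apply: mem_head.
  by split=> // w; rewrite mem_seq1 => /eqP ->.
have [mid [c [p' [def_p midZ cZ]]]] := split_first_notin (mem_last y p) lastZ.
move: (y :: p) def_p size_p Pp Up lastZ => _ -> size_p Pp Up lastZ.
rewrite last_cat /= in lastZ *.
move: Pp; rewrite cat_path /= => /andP [Pmid /andP [Emc Pp']].
have Zmid : Zpath E Z x c mid.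
  split=> //; split=> //; last by apply/chain_path; rewrite rcons_path Pmid.
  by move: Up; rewrite -cat_rcons -cat_cons cat_uniq => /andP [].
have Up' : uniq (c :: p') by move: Up; rewrite -cat_cons cat_uniq => /and3P [].
have x_notin : x \notin c :: p'.
  by move: Up; rewrite /= mem_cat negb_or => /andP [/andP [_ ->]].
have size_p' : size p' < n.
  by apply: leq_trans size_p; rewrite size_cat /= addnS ltnS leq_addl.
have [r [Pr last_r odd_r src_r]] := IH p' c size_p' Pp' Up' cZ lastZ.
have [|h [Phr odd_h src_h]] := torso_path_hop Zmid xZ Pr.
  by move=> w /src_r; apply: contraTneq => ->.
exists (h ++ inl c :: r); split=> //.
- by rewrite last_cat.
- by rewrite !size_cat /= !oddD odd_h /= odd_r.
- move=> w; rewrite in_cons mem_cat => /or3P [/eqP -> | /src_h -> | /src_r w_in].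
  + exact: mem_head.
  + exact: mem_head.
  + by rewrite inE mem_cat w_in !orbT.
Qed.

Variables Vinf T : {set V}.

Lemma torso_solution_of_solution M :
  acyclic_rel E -> {in M, forall m, m \notin Z} ->
  is_solution (fun _ => True) (fun a b => E a b)
    (fun x => x \in Vinf) (fun x => x \in T) M ->
  is_solution (torso_vert E Z) (torso_edge E Z)
    (torso_Vinf E Z Vinf) (torso_T T) (map inl M).
Proof.
move=> acyclicE MZ [Mvalid Mhit]; split.
  move=> _ /mapP [m m_M ->]; split; first exact: MZ.
  by case=> m_inf _; case: (Mvalid m m_M) => _; apply.
move=> [a|//] p [_ _ walk_p] odd_p Ta; case last_p: (last (inl a) p) => [b|//] Tb.
have [q [Pq last_q parity_q qZ]] := torso_walk_lift walk_p last_p.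
have path_q : is_path (fun _ => True) (fun a b => E a b) a q.
  by split=> //; [exact: acyclic_path_uniq Pq | apply/chain_path].
have odd_q : odd (size q) by rewrite parity_q odd_p.
rewrite -last_q in Tb.
have [m [m_M m_q]] := Mhit a q path_q odd_q Ta Tb.
exists (inl m); split; first exact: map_f.
move: m_q; rewrite inE => /orP [/eqP -> | m_q]; first exact: mem_head.
by rewrite inE qZ ?MZ ?orbT.
Qed.

Lemma solution_of_torso_solution M' :
  [disjoint Z & T] ->
  is_solution (torso_vert E Z) (torso_edge E Z)
    (torso_Vinf E Z Vinf) (torso_T T) M' ->
  is_solution (fun _ => True) (fun a b => E a b)
    (fun x => x \in Vinf) (fun x => x \in T) (pmap (@getl _ _) M').
Proof.
move=> disjZT [Mvalid Mhit]; split.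
  by move=> m; rewrite mem_pmap_getl => /Mvalid [mZ m_inf]; split=> // m_Vinf; apply: m_inf.
move=> x p [Up _ /chain_path Pp] odd_p Tx Tlast.
have [r [Pr last_r odd_r src_r]] :=
  torso_path_project Pp Up (negbT (disjointFl disjZT Tx)) (negbT (disjointFl disjZT Tlast)).
have odd_r' : odd (size r) by rewrite odd_r.
have T_last_r : torso_T T (last (inl x) r) by rewrite last_r.
have [[y|w] [w_M w_r]] := Mhit (inl x) r Pr odd_r' Tx T_last_r.
  by exists y; rewrite mem_pmap_getl; split=> //; exact: src_r w_r.
by case: (Mvalid _ w_M) => _ []; case: Pr => _ /(_ _ w_r).
Qed.

End Torso.

Theorem corollary2p4 (V : finType) (E : rel V) (Vinf T Z : {set V}) (k : nat) :
  acyclic_rel E -> T \subset Vinf -> [disjoint Z & T] ->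
  (exists M : seq V,
     [/\ uniq M, size M <= k, (forall m, m \in M -> m \notin Z) &
         is_solution (fun _ => True) (fun a b => E a b)
           (fun x => x \in Vinf) (fun x => x \in T) M])
  <->
  (exists M' : seq (V + (V * V)),
     [/\ uniq M', size M' <= k &
         is_solution (torso_vert E Z) (torso_edge E Z)
           (torso_Vinf E Z Vinf) (torso_T T) M']).
Proof.
move=> acyclicE _ disjZT; split.
- case=> M [uniqM sizeM MZ solM]; exists (map inl M); split.
  + by rewrite map_inj_uniq //; move=> a b [].
  + by rewrite size_map.
  + exact: torso_solution_of_solution acyclicE MZ solM.
- case=> M' [uniqM' sizeM' solM']; exists (pmap (@getl _ _) M'); split.
  + by apply: (@pmap_uniq _ _ (@getl _ _) inl) uniqM'; case.
  + by rewrite size_pmap (leq_trans (count_size _ _)).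
  + by move=> m; rewrite mem_pmap_getl => /(proj1 solM') [].
  + exact: solution_of_torso_solution disjZT solM'.
Qed.
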